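(* Let $P^0,P^1\in\Delta^{n-1}_+$ with $P^0\succ_{P^*}P^1$. Then $P^1\in P^0+\mathbf{Q}(P^0,P^* )$.
   Context: Fix $n\ge 2$ and a positive equilibrium distribution $P^*=(p^*_i)$, $p^*_i>0$, $\sum_i p^*_i=1$. Let $\Delta^{n-1}_+=\{P\in\mathbb{R}^n: p_i>0,\ \sum_i p_i=1\}$. A Markov chain with equilibrium $P^*$ is given by rate constants $q_{ij}\ge 0$ ($i\neq j$) satisfying $\sum_{j\ne i}q_{ij}p^*_j=\bigl(\sum_{j\ne i}q_{ji}\bigr)p^*_i$ for all $i$, with Kolmogorov equation $\frac{dp_i}{dt}=\sum_{j\ne i}(q_{ij}p_j-q_{ji}p_i)$. $P^0\succ^0_{P^*}P^1$ if for some such chain the solution with $P(0)=P^0$ has $P(1)=P^1$; the Markov order $\succ_{P^*}$ is the closed transitive closure of $\succ^0_{P^*}$. For $i\neq j$ let $\gamma^{ji}$ be the vector with $\gamma^{ji}_j=-1$, $\gamma^{ji}_i=1$, other coordinates $0$; ${\rm cone}$ denotes non-negative linear combinations; ${\rm sign}$ is the three-valued sign function; $\mathbf{Q}(P,P^* )={\rm cone}\{\gamma^{ji}\,{\rm sign}(\tfrac{p_j}{p^*_j}-\tfrac{p_i}{p^*_i}) : 1\le j<i\le n\}$. *)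

From Stdlib Require Import Reals Lra.
Open Scope R_scope.

(* Vectors in R^n are functions nat -> R; only indices 0..n-1 matter. *)
Definition vec := nat -> R.

Fixpoint fsum (n : nat) (f : nat -> R) : R :=
  match n with
  | O => 0
  | S m => fsum m f + f m
  end.

Definition pos_simplex (n : nat) (P : vec) : Prop :=
  (forall i, (i < n)%nat -> 0 < P i) /\ fsum n P = 1.

Definition markov_rates (n : nat) (Pstar : vec) (q : nat -> nat -> R) : Prop :=
  (forall i j, (i < n)%nat -> (j < n)%nat -> i <> j -> 0 <= q i j) /\
  (forall i, (i < n)%nat ->
     fsum n (fun j => if Nat.eqb j i then 0 else q i j * Pstar j)
     = fsum n (fun j => if Nat.eqb j i then 0 else q j i) * Pstar i).

Definition kolmogorov_rhs (n : nat) (q : nat -> nat -> R) (p : vec) (i : nat) : R :=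
  fsum n (fun j => if Nat.eqb j i then 0 else q i j * p j - q j i * p i).

Definition kolmogorov_solution (n : nat) (q : nat -> nat -> R) (P : R -> vec) : Prop :=
  forall i, (i < n)%nat ->
    forall t, derivable_pt_lim (fun s => P s i) t (kolmogorov_rhs n q (P t) i).

Definition vec_eq (n : nat) (P Q : vec) : Prop := forall i, (i < n)%nat -> P i = Q i.

Definition markov_step (n : nat) (Pstar P0 P1 : vec) : Prop :=
  pos_simplex n P0 /\
  exists q : nat -> nat -> R, exists P : R -> vec,
    markov_rates n Pstar q /\ kolmogorov_solution n q P /\
    vec_eq n (P 0) P0 /\ vec_eq n (P 1) P1.

Definition transitive_on (Rel : vec -> vec -> Prop) : Prop :=
  forall a b c, Rel a b -> Rel b c -> Rel a c.

Definition closed_rel (n : nat) (Rel : vec -> vec -> Prop) : Prop :=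
  forall (A B : nat -> vec) (a b : vec),
    (forall k, Rel (A k) (B k)) ->
    (forall i, (i < n)%nat -> Un_cv (fun k => A k i) (a i)) ->
    (forall i, (i < n)%nat -> Un_cv (fun k => B k i) (b i)) ->
    pos_simplex n a -> pos_simplex n b ->
    Rel a b.

(* Markov order: the smallest closed transitive relation containing markov_step *)
Definition markov_order (n : nat) (Pstar P0 P1 : vec) : Prop :=
  forall Rel : vec -> vec -> Prop,
    (forall a b, markov_step n Pstar a b -> Rel a b) ->
    transitive_on Rel -> closed_rel n Rel ->
    Rel P0 P1.

Definition sgn (x : R) : R :=
  if Rlt_dec x 0 then -1 else if Req_EM_T x 0 then 0 else 1.

Definition gamma_vec (j i : nat) : vec :=
  fun k => (if Nat.eqb k i then 1 else 0) - (if Nat.eqb k j then 1 else 0).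

Definition in_Q (n : nat) (P Pstar v : vec) : Prop :=
  exists c : nat -> nat -> R,
    (forall j i, 0 <= c j i) /\
    forall k, (k < n)%nat ->
      v k = fsum n (fun i => fsum i (fun j =>
              c j i * sgn (P j / Pstar j - P i / Pstar i) * gamma_vec j i k)).

(* The proof goes through the family of "threshold excesses"
     F_th(x) = sum_i max (x_i - th * pstar_i, 0),   th in R,
   and the relation "b is majorized by a": F_th(b) <= F_th(a) for every th.

   1. Along any solution of the Kolmogorov equation every F_th is
      nonincreasing: its upper right Dini derivative is a sum
      sum_i chi_i * (dP_i/dt) with chi_i in {0,1} chosen by the sign of
      P_i - th pstar_i, and such a sum is <= 0 because the right-hand side
      annihilates Pstar and the rates are nonnegative (dissipation inequality).
      Majorization is moreover transitive and closed, so it contains the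
      whole Markov order.
   2. Majorization of b by a, with equal total mass, forces the vector
      v = b - a to have nonpositive mass on every "upper set" of the ratio
      order k |-> a_k / pstar_k.  Such a vector is decomposed greedily into
      transfers from higher to lower ratios, i.e. it lies in Q(a, Pstar). *)

From Stdlib Require Import Reals Lra Lia Classical Bool.
Open Scope R_scope.

Lemma fsum_ext n f g :
  (forall i, (i < n)%nat -> f i = g i) -> fsum n f = fsum n g.
Proof.
  induction n as [|n IH]; intros H; simpl; auto.
  rewrite IH, (H n) by (auto; lia); reflexivity.
Qed.

Lemma fsum_plus n f g : fsum n (fun i => f i + g i) = fsum n f + fsum n g.
Proof. induction n as [|n IH]; simpl; [lra|]. rewrite IH; lra. Qed.

Lemma fsum_minus n f g : fsum n (fun i => f i - g i) = fsum n f - fsum n g.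
Proof. induction n as [|n IH]; simpl; [lra|]. rewrite IH; lra. Qed.

Lemma fsum_scal n c f : fsum n (fun i => c * f i) = c * fsum n f.
Proof. induction n as [|n IH]; simpl; [lra|]. rewrite IH; lra. Qed.

Lemma fsum_const n c : fsum n (fun _ => c) = INR n * c.
Proof. induction n as [|n IH]; simpl fsum; [simpl; ring|]. rewrite IH, S_INR; ring. Qed.

Lemma fsum_le n f g :
  (forall i, (i < n)%nat -> f i <= g i) -> fsum n f <= fsum n g.
Proof.
  induction n as [|n IH]; intros H; simpl; [lra|].
  pose proof (H n ltac:(lia)); pose proof (IH ltac:(intros; apply H; lia)); lra.
Qed.

Lemma fsum_nonpos n f : (forall i, (i < n)%nat -> f i <= 0) -> fsum n f <= 0.
Proof. intros H. rewrite <- (Rmult_0_r (INR n)), <- fsum_const. now apply fsum_le. Qed.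

Lemma fsum_single n m f :
  (m < n)%nat -> (forall i, (i < n)%nat -> i <> m -> f i = 0) -> fsum n f = f m.
Proof.
  induction n as [|n IH]; intros Hm H; [lia|]. simpl.
  destruct (Nat.eq_dec m n) as [->|Hne].
  - rewrite (fsum_ext n f (fun _ => 0)), fsum_const by (intros; apply H; lia). ring.
  - rewrite IH, (H n) by (try lia; intros; apply H; lia). ring.
Qed.

Lemma fsum_indicator n m :
  (m < n)%nat -> fsum n (fun k => if Nat.eqb k m then 1 else 0) = 1.
Proof.
  intros Hm. rewrite (fsum_single n m); [now rewrite Nat.eqb_refl|exact Hm|].
  intros i _ Hi. now apply Nat.eqb_neq in Hi as ->.
Qed.

Lemma fsum_ge_term n f m :
  (forall k, (k < n)%nat -> 0 <= f k) -> (m < n)%nat -> f m <= fsum n f.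
Proof.
  intros H Hm.
  assert (Hs : fsum n (fun k => if Nat.eq_dec k m then f m else 0) = f m).
  { rewrite (fsum_single n m); [now destruct (Nat.eq_dec m m)|exact Hm|].
    intros i _ Hi; now destruct (Nat.eq_dec i m). }
  rewrite <- Hs. apply fsum_le; intros i Hi.
  destruct (Nat.eq_dec i m) as [->|]; [lra|auto].
Qed.

Lemma fsum_nonpos_eq0 n f :
  (forall k, (k < n)%nat -> f k <= 0) -> fsum n f = 0 -> forall k, (k < n)%nat -> f k = 0.
Proof.
  intros H Hs k Hk.
  pose proof (fsum_ge_term n (fun i => -1 * f i) k) as Hge.
  rewrite fsum_scal, Hs in Hge.
  assert (-1 * f k <= -1 * 0) by (apply Hge; auto; intros i Hi; pose proof (H i Hi); lra).
  pose proof (H k Hk); lra.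
Qed.

Lemma fsum_neg_term n f : fsum n f < 0 -> exists k, (k < n)%nat /\ f k < 0.
Proof.
  intros H. apply NNPP; intros Hno. apply (Rlt_not_le _ _ H).
  rewrite <- (Rmult_0_r (INR n)), <- fsum_const. apply fsum_le; intros k Hk.
  apply Rnot_lt_le; intros Hlt; eauto.
Qed.

Lemma fsum_swap n f :
  fsum n (fun i => fsum n (fun j => f i j)) = fsum n (fun j => fsum n (fun i => f i j)).
Proof.
  induction n as [|n IH]; simpl; [lra|].
  rewrite !fsum_plus, IH. change (fsum n (f n)) with (fsum n (fun j => f n j)). lra.
Qed.

(** * The cone Q(a, Pstar) *)

Definition ratio (a Pstar : vec) (k : nat) : R := a k / Pstar k.

Lemma gamma_target j i : i <> j -> gamma_vec j i i = 1.
Proof.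
  intros H. unfold gamma_vec. rewrite Nat.eqb_refl.
  apply Nat.eqb_neq in H as ->. ring.
Qed.

Lemma gamma_source j i : i <> j -> gamma_vec j i j = -1.
Proof.
  intros H. unfold gamma_vec. rewrite Nat.eqb_refl.
  assert (Nat.eqb j i = false) as -> by (apply Nat.eqb_neq; auto). ring.
Qed.

Lemma gamma_other j i k : k <> i -> k <> j -> gamma_vec j i k = 0.
Proof. intros H1 H2. unfold gamma_vec. apply Nat.eqb_neq in H1 as ->, H2 as ->. ring. Qed.

Lemma gamma_swap j i k : gamma_vec i j k = - gamma_vec j i k.
Proof. unfold gamma_vec. ring. Qed.

Lemma fsum_gamma n j i : (j < n)%nat -> (i < n)%nat -> fsum n (gamma_vec j i) = 0.
Proof. intros Hj Hi. unfold gamma_vec. rewrite fsum_minus, !fsum_indicator by auto. ring. Qed.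

Lemma in_Q_ext n a Pstar v w :
  (forall k, (k < n)%nat -> v k = w k) -> in_Q n a Pstar w -> in_Q n a Pstar v.
Proof. intros H [c [Hc Hw]]. exists c; split; auto. intros k Hk. rewrite H; auto. Qed.

Lemma in_Q_zero n a Pstar v : (forall k, (k < n)%nat -> v k = 0) -> in_Q n a Pstar v.
Proof.
  intros H. exists (fun _ _ => 0); split; [intros; lra|]. intros k Hk.
  rewrite H by auto. rewrite (fsum_ext n _ (fun _ => 0)), fsum_const; [ring|].
  intros i _. rewrite (fsum_ext i _ (fun _ => 0)), fsum_const; [ring|]. intros; ring.
Qed.

Lemma in_Q_add_generator n a Pstar w j i s :
  (j < i)%nat -> (i < n)%nat -> 0 <= s -> in_Q n a Pstar w ->
  in_Q n a Pstar
    (fun k => w k + s * sgn (a j / Pstar j - a i / Pstar i) * gamma_vec j i k).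
Proof.
  intros Hji Hi Hs [c [Hc Hw]].
  set (d := fun y x => if andb (Nat.eqb y j) (Nat.eqb x i) then s else 0).
  exists (fun y x => c y x + d y x). split.
  { intros y x. unfold d. pose proof (Hc y x). destruct (andb _ _); lra. }
  intros k Hk. rewrite Hw by exact Hk.
  set (T := fun y x => sgn (a y / Pstar y - a x / Pstar x) * gamma_vec y x k).
  assert (Hd : fsum n (fun x => fsum x (fun y => d y x * T y x)) = s * T j i).
  { rewrite (fsum_single n i); auto.
    - rewrite (fsum_single i j); auto.
      + unfold d. rewrite !Nat.eqb_refl. simpl. ring.
      + intros y _ Hy. unfold d. apply Nat.eqb_neq in Hy as ->. simpl. ring.
    - intros x _ Hx. rewrite (fsum_ext x _ (fun _ => 0)), fsum_const; [ring|].
      intros y _. unfold d. apply Nat.eqb_neq in Hx as ->. rewrite andb_false_r. ring. }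
  transitivity (fsum n (fun x => fsum x (fun y => c y x * T y x))
                + fsum n (fun x => fsum x (fun y => d y x * T y x))).
  - rewrite Hd. unfold T. f_equal; [|ring].
    apply fsum_ext; intros x _; apply fsum_ext; intros y _; ring.
  - rewrite <- fsum_plus. apply fsum_ext; intros x _.
    rewrite <- fsum_plus. apply fsum_ext; intros y _. unfold T. ring.
Qed.

(* Moving mass from a coordinate of larger ratio to one of smaller ratio
   stays inside Q: this is the generator gamma^{ji} with positive sign. *)
Lemma in_Q_add_downhill n a Pstar w i j t :
  (i < n)%nat -> (j < n)%nat -> ratio a Pstar i < ratio a Pstar j -> 0 <= t ->
  in_Q n a Pstar w -> in_Q n a Pstar (fun k => w k + t * gamma_vec j i k).
Proof.
  unfold ratio. intros Hi Hj Hr Ht Hw.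
  destruct (Nat.lt_total j i) as [Hlt|[->|Hlt]]; [| lra |].
  - eapply in_Q_ext; [|apply (in_Q_add_generator n a Pstar w j i t); auto].
    intros k _. unfold sgn. destruct (Rlt_dec _ 0); [lra|].
    destruct (Req_EM_T _ 0); [lra|]. ring.
  - eapply in_Q_ext; [|apply (in_Q_add_generator n a Pstar w i j t); auto].
    intros k _. unfold sgn. destruct (Rlt_dec _ 0); [|lra]. rewrite gamma_swap. ring.
Qed.

(** * Greedy decomposition into downhill transfers *)

(* Contribution of coordinate k, carrying mass x, to the largest mass that an
   upper set of the ratio order at level l can carry: all of x strictly above
   level l, its positive part on level l, nothing below. *)
Definition level_term (a Pstar : vec) (l x : R) (k : nat) : R :=
  if Rlt_dec l (ratio a Pstar k) then x
  else if Req_EM_T (ratio a Pstar k) l then Rmax x 0 else 0.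

(* The largest mass of v on an upper set at level l. *)
Definition upper_excess (n : nat) (a Pstar v : vec) (l : R) : R :=
  fsum n (fun k => level_term a Pstar l (v k) k).

(* Number of nonzero coordinates: the measure for the greedy induction. *)
Fixpoint support_size (n : nat) (v : vec) : nat :=
  match n with
  | O => O
  | S m => (support_size m v + (if Req_EM_T (v m) 0 then 0 else 1))%nat
  end.

Definition untransfer (v : vec) (j i : nat) (t : R) : vec :=
  fun k => v k - t * gamma_vec j i k.

Lemma untransfer_target v j i t : i <> j -> untransfer v j i t i = v i - t.
Proof. intros H. unfold untransfer. rewrite gamma_target by exact H. ring. Qed.

Lemma untransfer_source v j i t : i <> j -> untransfer v j i t j = v j + t.
Proof. intros H. unfold untransfer. rewrite gamma_source by exact H. ring. Qed.

Lemma untransfer_other v j i t k : k <> i -> k <> j -> untransfer v j i t k = v k.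
Proof. intros H1 H2. unfold untransfer. rewrite gamma_other by auto. ring. Qed.

Lemma support_size_le n v w :
  (forall k, (k < n)%nat -> v k = 0 -> w k = 0) -> (support_size n w <= support_size n v)%nat.
Proof.
  induction n as [|n IH]; intros H; simpl; [lia|].
  pose proof (IH ltac:(intros; apply H; auto; lia)).
  destruct (Req_EM_T (v n) 0) as [Hv|Hv], (Req_EM_T (w n) 0) as [Hw|Hw]; try lia.
  exfalso; apply Hw, H; auto.
Qed.

Lemma support_size_lt n v w :
  (forall k, (k < n)%nat -> v k = 0 -> w k = 0) ->
  (exists k, (k < n)%nat /\ v k <> 0 /\ w k = 0) ->
  (support_size n w < support_size n v)%nat.
Proof.
  induction n as [|n IH]; intros H [k [Hk [Hv Hw]]]; simpl; [lia|].
  destruct (Nat.eq_dec k n) as [->|Hne].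
  - pose proof (support_size_le n v w ltac:(intros; apply H; auto; lia)).
    destruct (Req_EM_T (v n) 0); [tauto|]. destruct (Req_EM_T (w n) 0); [lia|tauto].
  - pose proof (IH ltac:(intros; apply H; auto; lia) ltac:(exists k; repeat split; auto; lia)).
    destruct (Req_EM_T (v n) 0) as [Hv'|Hv'], (Req_EM_T (w n) 0) as [Hw'|Hw']; try lia.
    exfalso; apply Hw', H; auto.
Qed.

(* Cancelling min(v_i, -v_j) between a positive and a negative coordinate
   creates a new zero and destroys none. *)
Lemma support_size_untransfer n v j i :
  (i < n)%nat -> (j < n)%nat -> 0 < v i -> v j < 0 ->
  (support_size n (untransfer v j i (Rmin (v i) (- v j))) < support_size n v)%nat.
Proof.
  intros Hi Hj Hvi Hvj. assert (Hij : i <> j) by (intros ->; lra).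
  apply support_size_lt.
  - intros k _ Hk. rewrite untransfer_other; auto; intros ->; lra.
  - unfold Rmin; destruct (Rle_dec (v i) (- v j)).
    + exists i. rewrite untransfer_target by exact Hij. repeat split; auto; lra.
    + exists j. rewrite untransfer_source by exact Hij. repeat split; auto; lra.
Qed.

Lemma exists_argmax n (P : nat -> Prop) (f : nat -> R) :
  (exists k, (k < n)%nat /\ P k) ->
  exists i, (i < n)%nat /\ P i /\ forall k, (k < n)%nat -> P k -> f k <= f i.
Proof.
  induction n as [|n IH]; intros [k [Hk Pk]]; [lia|].
  destruct (classic (exists k, (k < n)%nat /\ P k)) as [Hex|Hno].
  - destruct (IH Hex) as [i [Hi [Pi Hmax]]].
    destruct (classic (P n /\ f i < f n)) as [[Pn Hlt]|Hn].
    + exists n. repeat split; auto. intros k' Hk' Pk'.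
      destruct (Nat.eq_dec k' n) as [->|]; [lra|]. pose proof (Hmax k' ltac:(lia) Pk'); lra.
    + exists i. repeat split; auto. intros k' Hk' Pk'.
      destruct (Nat.eq_dec k' n) as [->|]; [|apply Hmax; auto; lia].
      apply Rnot_lt_le; intros; auto.
  - exists k. repeat split; auto. intros k' Hk' Pk'.
    destruct (Nat.eq_dec k' k) as [->|]; [lra|].
    exfalso; apply Hno. exists (if Nat.eq_dec k n then k' else k).
    destruct (Nat.eq_dec k n); split; auto; lia.
Qed.

Lemma upper_excess_nonpos n a Pstar v l :
  (forall k, (k < n)%nat -> l <= ratio a Pstar k -> v k <= 0) ->
  upper_excess n a Pstar v l <= 0.
Proof.
  intros H. apply fsum_nonpos; intros k Hk. unfold level_term.
  destruct (Rlt_dec l (ratio a Pstar k)); [apply H; auto; lra|].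
  destruct (Req_EM_T (ratio a Pstar k) l); [|lra].
  apply Rmax_lub; [apply H; auto; lra|lra].
Qed.

Lemma upper_excess_supplier n a Pstar v i :
  (i < n)%nat -> 0 < v i -> upper_excess n a Pstar v (ratio a Pstar i) <= 0 ->
  exists j, (j < n)%nat /\ ratio a Pstar i < ratio a Pstar j /\ v j < 0.
Proof.
  intros Hi Hvi Hexc. set (r := ratio a Pstar) in *.
  set (strict := fun k => if Rlt_dec (r i) (r k) then v k else 0).
  assert (Hbound : fsum n strict + v i <= upper_excess n a Pstar v (r i)).
  { assert (Hvi_sum : fsum n (fun k => if Nat.eqb k i then v i else 0) = v i).
    { rewrite (fsum_single n i); [now rewrite Nat.eqb_refl|exact Hi|].
      intros k _ Hk. now apply Nat.eqb_neq in Hk as ->. }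
    rewrite <- Hvi_sum, <- fsum_plus.
    apply fsum_le; intros k _. unfold strict, level_term; fold r.
    destruct (Nat.eqb k i) eqn:Hk.
    - apply Nat.eqb_eq in Hk as ->. destruct (Rlt_dec (r i) (r i)); [lra|].
      destruct (Req_EM_T (r i) (r i)); [|lra]. pose proof (Rmax_l (v i) 0); lra.
    - destruct (Rlt_dec (r i) (r k)); [lra|].
      destruct (Req_EM_T (r k) (r i)); [pose proof (Rmax_r (v k) 0)|]; lra. }
  destruct (fsum_neg_term n strict) as [j [Hj Hneg]]; [lra|].
  exists j. unfold strict in Hneg. destruct (Rlt_dec (r i) (r j)); [auto|lra].
Qed.

Lemma upper_excess_untransfer n a Pstar v j i t l :
  (i < n)%nat -> (j < n)%nat -> l <= ratio a Pstar i -> ratio a Pstar i < ratio a Pstar j ->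
  0 <= t <= v i ->
  upper_excess n a Pstar (untransfer v j i t) l = upper_excess n a Pstar v l.
Proof.
  intros Hi Hj Hli Hij Ht. assert (Hne : i <> j) by (intros ->; lra).
  unfold upper_excess.
  rewrite (fsum_ext n _ (fun k => level_term a Pstar l (v k) k - t * gamma_vec j i k)).
  { rewrite fsum_minus, fsum_scal, fsum_gamma by auto. ring. }
  intros k _. unfold level_term.
  destruct (Nat.eq_dec k i) as [->|Hki]; [|destruct (Nat.eq_dec k j) as [->|Hkj]].
  - rewrite untransfer_target, gamma_target by exact Hne.
    destruct (Rlt_dec l (ratio a Pstar i)); [ring|].
    destruct (Req_EM_T (ratio a Pstar i) l); [|lra].
    rewrite !Rmax_left by lra. ring.
  - rewrite untransfer_source, gamma_source by exact Hne.
    destruct (Rlt_dec l (ratio a Pstar j)); [ring|lra].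
  - rewrite untransfer_other, gamma_other by auto. ring.
Qed.

(* Greedy step, by induction on a bound m for the support size: cancel the
   positive coordinate of largest ratio against a supplier of larger ratio. *)
Lemma cone_decomposition_bounded n a Pstar :
  forall m v, (support_size n v < m)%nat -> fsum n v = 0 ->
  (forall l, upper_excess n a Pstar v l <= 0) -> in_Q n a Pstar v.
Proof.
  induction m as [|m IH]; intros v Hsize Hsum Hexc; [lia|].
  destruct (classic (exists k, (k < n)%nat /\ 0 < v k)) as [Hpos|Hnone].
  2:{ apply in_Q_zero, fsum_nonpos_eq0; auto. intros k Hk.
      apply Rnot_lt_le; intros Hv; eauto. }
  set (r := ratio a Pstar).
  destruct (exists_argmax n (fun k => 0 < v k) r Hpos) as [i [Hi [Hvi Hmax]]].
  assert (Habove : forall k, (k < n)%nat -> r i < r k -> v k <= 0).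
  { intros k Hk Hr. apply Rnot_lt_le; intros Hv. pose proof (Hmax k Hk Hv); lra. }
  destruct (upper_excess_supplier n a Pstar v i Hi Hvi (Hexc _)) as [j [Hj [Hrij Hvj]]].
  assert (Hij : i <> j) by (intros ->; lra).
  set (t := Rmin (v i) (- v j)).
  assert (Ht : 0 <= t <= v i /\ t <= - v j).
  { unfold t, Rmin; destruct (Rle_dec (v i) (- v j)); lra. }
  apply (in_Q_ext n a Pstar v (fun k => untransfer v j i t k + t * gamma_vec j i k)).
  { intros k _. unfold untransfer. ring. }
  apply in_Q_add_downhill; auto; [lra|]. apply IH.
  - pose proof (support_size_untransfer n v j i Hi Hj Hvi Hvj) as Hlt; fold t in Hlt; lia.
  - unfold untransfer. rewrite fsum_minus, fsum_scal, fsum_gamma, Hsum by auto. ring.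
  - intros l. destruct (Rle_dec l (r i)).
    + rewrite upper_excess_untransfer by (auto; lra). apply Hexc.
    + apply upper_excess_nonpos. intros k Hk Hl. fold r in Hl.
      destruct (Nat.eq_dec k i) as [->|Hki]; [lra|].
      destruct (Nat.eq_dec k j) as [->|Hkj].
      * rewrite untransfer_source by exact Hij. lra.
      * rewrite untransfer_other by auto. apply Habove; auto; lra.
Qed.

Lemma cone_decomposition n a Pstar v :
  fsum n v = 0 -> (forall l, upper_excess n a Pstar v l <= 0) -> in_Q n a Pstar v.
Proof. apply (cone_decomposition_bounded n a Pstar (S (support_size n v))); lia. Qed.

(** * Threshold excesses and majorization *)

Definition threshold_excess (n : nat) (Pstar : vec) (th : R) (x : vec) : R :=
  fsum n (fun i => Rmax (x i - th * Pstar i) 0).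

Definition majorized (n : nat) (Pstar a b : vec) : Prop :=
  forall th, threshold_excess n Pstar th b <= threshold_excess n Pstar th a.

Lemma majorized_trans n Pstar : transitive_on (majorized n Pstar).
Proof. intros a b c Hab Hbc th. specialize (Hab th); specialize (Hbc th); lra. Qed.

Lemma pos_part_lipschitz x y : Rabs (Rmax x 0 - Rmax y 0) <= Rabs (x - y).
Proof.
  unfold Rmax. destruct (Rle_dec x 0), (Rle_dec y 0); unfold Rabs;
  repeat destruct Rcase_abs; lra.
Qed.

Lemma continuity_pos_part_shift c : continuity (fun x => Rmax (x - c) 0).
Proof.
  intros x e He. exists e; split; [exact He|]. intros y [_ Hy]. simpl in *.
  unfold Rdist in *. eapply Rle_lt_trans; [apply pos_part_lipschitz|].
  replace (y - c - (x - c)) with (y - x) by ring. exact Hy.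
Qed.

Lemma cv_fsum n (A : nat -> vec) (a : vec) :
  (forall i, (i < n)%nat -> Un_cv (fun k => A k i) (a i)) ->
  Un_cv (fun k => fsum n (A k)) (fsum n a).
Proof.
  induction n as [|n IH]; intros H; simpl.
  - intros e He. exists O. intros. unfold Rdist. rewrite Rminus_diag, Rabs_R0. lra.
  - apply CV_plus; [apply IH; intros; apply H; lia|apply H; lia].
Qed.

(* Threshold excesses are continuous, so majorization is a closed relation. *)
Lemma majorized_closed n Pstar : closed_rel n (majorized n Pstar).
Proof.
  intros A B a b HAB HA HB _ _ th.
  eapply Rle_cv_lim; [exact (fun k => HAB k th)| |]; apply cv_fsum; intros i Hi;
    apply (continuity_seq (fun x => Rmax (x - th * Pstar i) 0));
    auto; apply continuity_pos_part_shift.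
Qed.

Lemma level_term_le_threshold a b Pstar l k :
  0 < Pstar k ->
  level_term a Pstar l (b k - a k) k
  <= Rmax (b k - l * Pstar k) 0 - Rmax (a k - l * Pstar k) 0.
Proof.
  intros Hp. unfold level_term.
  assert (Ha : a k = ratio a Pstar k * Pstar k) by (unfold ratio; field; lra).
  destruct (Rlt_dec l (ratio a Pstar k)).
  - rewrite (Rmax_left (a k - l * Pstar k)) by nra. pose proof (Rmax_l (b k - l * Pstar k) 0). lra.
  - destruct (Req_EM_T (ratio a Pstar k) l) as [Heq|].
    + rewrite <- Heq, <- Ha, (Rmax_right (a k - a k)) by lra.
      replace (a k - a k) with 0 by ring. lra.
    + rewrite (Rmax_right (a k - l * Pstar k)) by nra. pose proof (Rmax_r (b k - l * Pstar k) 0). lra.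
Qed.

Lemma majorized_upper_excess n Pstar a b l :
  (forall k, (k < n)%nat -> 0 < Pstar k) -> majorized n Pstar a b ->
  upper_excess n a Pstar (fun k => b k - a k) l <= 0.
Proof.
  intros Hp Hmaj. specialize (Hmaj l). unfold threshold_excess in Hmaj.
  eapply Rle_trans; [apply fsum_le; intros k Hk; apply level_term_le_threshold, Hp, Hk|].
  rewrite fsum_minus. lra.
Qed.

(** * Dissipation along the Kolmogorov equation *)

Lemma kolmogorov_rhs_shift n q p Pstar th i :
  kolmogorov_rhs n q (fun k => p k - th * Pstar k) i
  = kolmogorov_rhs n q p i - th * kolmogorov_rhs n q Pstar i.
Proof.
  unfold kolmogorov_rhs. rewrite <- fsum_scal, <- fsum_minus.
  apply fsum_ext; intros j _. destruct (Nat.eqb j i); ring.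
Qed.

Lemma kolmogorov_rhs_equilibrium n Pstar q i :
  markov_rates n Pstar q -> (i < n)%nat -> kolmogorov_rhs n q Pstar i = 0.
Proof.
  intros [_ Hbal] Hi. unfold kolmogorov_rhs.
  rewrite (fsum_ext n _ (fun j => (if Nat.eqb j i then 0 else q i j * Pstar j)
                                  - Pstar i * (if Nat.eqb j i then 0 else q j i))).
  - rewrite fsum_minus, fsum_scal, Hbal by exact Hi. ring.
  - intros j _. destruct (Nat.eqb j i); ring.
Qed.

(* Dissipation inequality: for weights chi in {0,1} that select coordinates
   with y_j >= 0 and reject those with y_j <= 0,
     sum_i chi_i (K y)_i = sum_{i <> j} q_ij y_j (chi_i - chi_j) <= 0. *)
Lemma kolmogorov_dissipation n q (y chi : vec) :
  (forall i j, (i < n)%nat -> (j < n)%nat -> i <> j -> 0 <= q i j) ->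
  (forall j, (j < n)%nat -> (chi j = 1 /\ 0 <= y j) \/ (chi j = 0 /\ y j <= 0)) ->
  fsum n (fun i => chi i * kolmogorov_rhs n q y i) <= 0.
Proof.
  intros Hq Hsign.
  assert (Hform : fsum n (fun i => chi i * kolmogorov_rhs n q y i)
    = fsum n (fun i => fsum n (fun j => if Nat.eqb j i then 0 else chi i * q i j * y j))
      - fsum n (fun i => fsum n (fun j => if Nat.eqb j i then 0 else chi i * q j i * y i))).
  { rewrite <- fsum_minus. apply fsum_ext; intros i _. unfold kolmogorov_rhs.
    rewrite <- fsum_minus, <- fsum_scal. apply fsum_ext; intros j _.
    destruct (Nat.eqb j i); ring. }
  rewrite Hform, (fsum_swap n (fun i j => if Nat.eqb j i then 0 else chi i * q j i * y i)).
  rewrite <- fsum_minus. apply fsum_nonpos; intros i Hi.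
  rewrite <- fsum_minus. apply fsum_nonpos; intros j Hj.
  rewrite (Nat.eqb_sym i j). destruct (Nat.eqb j i) eqn:Hji; [lra|].
  apply Nat.eqb_neq in Hji. pose proof (Hq i j Hi Hj (not_eq_sym Hji)).
  destruct (Hsign i Hi) as [[-> _]|[-> _]], (Hsign j Hj) as [[-> ?]|[-> ?]]; nra.
Qed.

(** * Upper right Dini derivatives *)

(* g grows at most with slope s just to the right of t, i.e. the upper right
   Dini derivative of g at t is at most s. *)
Definition right_slope_le (g : R -> R) (t s : R) : Prop :=
  forall e, 0 < e -> exists del, 0 < del /\
    forall h, 0 < h < del -> g (t + h) <= g t + (s + e) * h.

Lemma right_slope_weaken g t s s' : s <= s' -> right_slope_le g t s -> right_slope_le g t s'.
Proof.
  intros Hss Hg e He. destruct (Hg e He) as [del [Hdel H]].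
  exists del; split; auto. intros h Hh. specialize (H h Hh). nra.
Qed.

Lemma right_slope_derivable f t d : derivable_pt_lim f t d -> right_slope_le f t d.
Proof.
  intros Hd e He. destruct (Hd e He) as [[del Hdel] Hclose]. exists del; split; auto.
  intros h [Hh0 Hh1].
  specialize (Hclose h ltac:(lra) ltac:(rewrite Rabs_right; simpl; lra)).
  apply Rabs_def2 in Hclose.
  assert (Hq : f (t + h) - f t = (f (t + h) - f t) / h * h) by (field; lra). nra.
Qed.

Lemma right_slope_plus f g t s1 s2 :
  right_slope_le f t s1 -> right_slope_le g t s2 ->
  right_slope_le (fun x => f x + g x) t (s1 + s2).
Proof.
  intros Hf Hg e He.
  destruct (Hf (e / 2)) as [d1 [Hd1 H1]]; [lra|].
  destruct (Hg (e / 2)) as [d2 [Hd2 H2]]; [lra|].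
  exists (Rmin d1 d2). split; [now apply Rmin_glb_lt|]. intros h Hh.
  pose proof (Rmin_l d1 d2); pose proof (Rmin_r d1 d2).
  specialize (H1 h ltac:(lra)); specialize (H2 h ltac:(lra)). lra.
Qed.

Lemma right_slope_fsum n (G : R -> vec) (s : vec) t :
  (forall i, (i < n)%nat -> right_slope_le (fun x => G x i) t (s i)) ->
  right_slope_le (fun x => fsum n (G x)) t (fsum n s).
Proof.
  induction n as [|n IH]; intros H; simpl.
  - intros e He. exists 1; split; [lra|]. intros h Hh. nra.
  - apply (right_slope_plus (fun x => fsum n (G x)) (fun x => G x n));
      [apply IH; intros; apply H|apply H]; lia.
Qed.

(* Weight 1 or 0 recording whether the positive part of y + d h is active for
   small h > 0. *)
Definition pos_part_weight (y d : R) : R :=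
  if Rlt_dec 0 y then 1 else if Rlt_dec y 0 then 0 else if Rlt_dec 0 d then 1 else 0.

Lemma lt_div_mul h y k : 0 < k -> h < y / k -> h * k < y.
Proof.
  intros Hk H. apply (Rmult_lt_compat_r k) in H; [|exact Hk].
  replace (y / k * k) with y in H by (field; lra). exact H.
Qed.

Lemma right_slope_pos_part f t d c :
  derivable_pt_lim f t d ->
  right_slope_le (fun x => Rmax (f x - c) 0) t (pos_part_weight (f t - c) d * d).
Proof.
  intros Hd e He. destruct (right_slope_derivable f t d Hd e He) as [del [Hdel Hf]].
  set (y := f t - c).
  assert (Hup : forall h, 0 < h < del -> Rmax (f (t + h) - c) 0 <= Rmax (y + (d + e) * h) 0).
  { intros h Hh. apply Rle_max_compat_r. specialize (Hf h Hh). unfold y. lra. }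
  pose proof (Rle_abs d) as Hd1. pose proof (Rle_abs (- d)) as Hd2. rewrite Rabs_Ropp in Hd2.
  unfold pos_part_weight. fold y. destruct (Rlt_dec 0 y) as [Hy|Hy].
  - exists (Rmin del (y / (Rabs d + 1))).
    split; [apply Rmin_glb_lt; [lra|apply Rdiv_lt_0_compat; lra]|].
    intros h Hh. pose proof (Rmin_l del (y / (Rabs d + 1))) as Hm1.
    pose proof (Rmin_r del (y / (Rabs d + 1))) as Hm2.
    pose proof (lt_div_mul h y (Rabs d + 1) ltac:(lra) ltac:(lra)).
    rewrite (Hup h ltac:(lra)), !Rmax_left by nra. lra.
  - destruct (Rlt_dec y 0) as [Hy'|Hy'].
    + exists (Rmin del (- y / (Rabs d + e + 1))).
      split; [apply Rmin_glb_lt; [lra|apply Rdiv_lt_0_compat; lra]|].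
      intros h Hh. pose proof (Rmin_l del (- y / (Rabs d + e + 1))) as Hm1.
      pose proof (Rmin_r del (- y / (Rabs d + e + 1))) as Hm2.
      pose proof (lt_div_mul h (- y) (Rabs d + e + 1) ltac:(lra) ltac:(lra)).
      rewrite (Hup h ltac:(lra)), !Rmax_right by nra. nra.
    + assert (Hy0 : y = 0) by lra.
      exists del; split; [exact Hdel|]. intros h Hh. rewrite (Hup h Hh), Hy0.
      rewrite (Rmax_right 0 0) by lra.
      destruct (Rlt_dec 0 d); apply Rmax_lub; nra.
Qed.

Lemma continuity_pt_pos_nbhd (g : R -> R) T :
  continuity_pt g T -> 0 < g T ->
  exists alp, 0 < alp /\ forall x, Rabs (x - T) < alp -> 0 < g x.
Proof.
  intros Hc Hpos. destruct (Hc (g T / 2)) as [alp [Halp Hnear]]; [lra|].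
  exists alp; split; [exact Halp|]. intros x Hx.
  destruct (Req_dec x T) as [->|Hne]; [exact Hpos|].
  assert (Hd : D_x no_cond T x) by (split; [exact I|auto]).
  specialize (Hnear x (conj Hd Hx)). simpl in Hnear. unfold Rdist in Hnear.
  apply Rabs_def2 in Hnear. lra.
Qed.

Lemma last_nonpos_point (h : R -> R) :
  (forall t, continuity_pt h t) -> h 0 <= 0 ->
  exists T, 0 <= T <= 1 /\ h T <= 0 /\ forall x, T < x <= 1 -> 0 < h x.
Proof.
  intros Hc H0. set (E := fun x => 0 <= x <= 1 /\ h x <= 0).
  destruct (completeness E) as [T [Hub Hlub]].
  { exists 1. intros x [Hx _]; lra. }
  { exists 0. split; [lra|exact H0]. }
  assert (HT0 : 0 <= T) by (apply Hub; split; [lra|exact H0]).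
  assert (HT1 : T <= 1) by (apply Hlub; intros x [Hx _]; lra).
  exists T; repeat split; auto.
  - apply Rnot_lt_le; intros HTpos.
    destruct (continuity_pt_pos_nbhd h T (Hc T) HTpos) as [alp [Halp Hnear]].
    assert (T <= T - alp / 2); [|lra].
    apply Hlub. intros x [Hx Hhx]. apply Rnot_lt_le; intros Hlt.
    assert (x <= T) by (apply Hub; split; auto).
    assert (0 < h x) by (apply Hnear, Rabs_def1; lra). lra.
  - intros x Hx. apply Rnot_le_lt; intros Hhx.
    assert (x <= T) by (apply Hub; split; [lra|exact Hhx]). lra.
Qed.

Lemma right_slope_nonincreasing (g : R -> R) :
  (forall t, continuity_pt g t) -> (forall t, right_slope_le g t 0) -> g 1 <= g 0.
Proof.
  intros Hc Hs.
  assert (Happrox : forall e, 0 < e -> g 1 <= g 0 + e).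
  { intros e He. set (h := fun x => g x - g 0 - e * x).
    assert (Hhc : forall t, continuity_pt h t).
    { intros t. unfold h. reg. apply Hc. }
    destruct (last_nonpos_point h Hhc ltac:(unfold h; lra)) as [T [HT [HhT Hafter]]].
    destruct (Rlt_dec T 1) as [Hlt|Hge].
    - exfalso. destruct (Hs T e He) as [del [Hdel Hstep]].
      set (s := Rmin (del / 2) (1 - T)).
      assert (0 < s) by (apply Rmin_glb_lt; lra).
      assert (s <= del / 2) by apply Rmin_l. assert (s <= 1 - T) by apply Rmin_r.
      specialize (Hstep s ltac:(lra)). specialize (Hafter (T + s) ltac:(lra)).
      unfold h in *. lra.
    - assert (T = 1) as -> by lra. unfold h in HhT. lra. }
  apply Rnot_lt_le; intros Hlt. specialize (Happrox ((g 1 - g 0) / 2) ltac:(lra)). lra.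
Qed.

Lemma pos_part_weight_sign y d :
  (pos_part_weight y d = 1 /\ 0 <= y) \/ (pos_part_weight y d = 0 /\ y <= 0).
Proof.
  unfold pos_part_weight.
  destruct (Rlt_dec 0 y); [left; lra|]. destruct (Rlt_dec y 0); [right; lra|].
  destruct (Rlt_dec 0 d); [left|right]; lra.
Qed.

Lemma continuity_pt_fsum n (G : R -> vec) t :
  (forall i, (i < n)%nat -> continuity_pt (fun s => G s i) t) ->
  continuity_pt (fun s => fsum n (G s)) t.
Proof.
  induction n as [|n IH]; intros H; simpl.
  - apply continuity_pt_const. intros x y; reflexivity.
  - apply (continuity_pt_plus (fun s => fsum n (G s)) (fun s => G s n));
      [apply IH; intros; apply H|apply H]; lia.
Qed.

Lemma threshold_excess_continuous n Pstar q P th t :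
  kolmogorov_solution n q P -> continuity_pt (fun s => threshold_excess n Pstar th (P s)) t.
Proof.
  intros Hsol. apply (continuity_pt_fsum n (fun s i => Rmax (P s i - th * Pstar i) 0)).
  intros i Hi.
  apply (continuity_pt_comp (fun s => P s i) (fun x => Rmax (x - th * Pstar i) 0)).
  - apply derivable_continuous_pt. exists (kolmogorov_rhs n q (P t) i). apply Hsol, Hi.
  - apply continuity_pos_part_shift.
Qed.

(* Along a solution of the Kolmogorov equation the upper right Dini derivative
   of F_th is a dissipation sum, hence nonpositive. *)
Lemma threshold_excess_right_slope n Pstar q P th t :
  markov_rates n Pstar q -> kolmogorov_solution n q P ->
  right_slope_le (fun s => threshold_excess n Pstar th (P s)) t 0.
Proof.
  intros Hrates Hsol.
  set (y := fun k => P t k - th * Pstar k).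
  set (chi := fun k => pos_part_weight (y k) (kolmogorov_rhs n q (P t) k)).
  apply (right_slope_weaken _ _ (fsum n (fun i => chi i * kolmogorov_rhs n q (P t) i))).
  - rewrite (fsum_ext n _ (fun i => chi i * kolmogorov_rhs n q y i)).
    + apply kolmogorov_dissipation; [apply Hrates|].
      intros j _. apply pos_part_weight_sign.
    + intros i Hi. unfold y.
      rewrite kolmogorov_rhs_shift, (kolmogorov_rhs_equilibrium n Pstar q i Hrates Hi). ring.
  - apply (right_slope_fsum n (fun s i => Rmax (P s i - th * Pstar i) 0)).
    intros i Hi. apply right_slope_pos_part, Hsol, Hi.
Qed.

Lemma threshold_excess_vec_eq n Pstar th x z :
  vec_eq n x z -> threshold_excess n Pstar th x = threshold_excess n Pstar th z.
Proof. intros H. unfold threshold_excess. apply fsum_ext; intros i Hi. now rewrite H. Qed.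

Lemma markov_step_majorized n Pstar a b : markov_step n Pstar a b -> majorized n Pstar a b.
Proof.
  intros [_ [q [P [Hrates [Hsol [H0 H1]]]]]] th.
  rewrite <- (threshold_excess_vec_eq n Pstar th _ _ H0),
          <- (threshold_excess_vec_eq n Pstar th _ _ H1).
  apply (right_slope_nonincreasing (fun s => threshold_excess n Pstar th (P s))); intros t.
  - apply (threshold_excess_continuous n Pstar q), Hsol.
  - apply (threshold_excess_right_slope n Pstar q); assumption.
Qed.

Lemma markov_order_majorized n Pstar a b : markov_order n Pstar a b -> majorized n Pstar a b.
Proof.
  intros H. apply H; [apply markov_step_majorized|apply majorized_trans|apply majorized_closed].
Qed.

Theorem corollary3 (n : nat) (Pstar P0 P1 : vec) :
  (2 <= n)%nat ->
  pos_simplex n Pstar ->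
  pos_simplex n P0 -> pos_simplex n P1 ->
  markov_order n Pstar P0 P1 ->
  in_Q n P0 Pstar (fun k => P1 k - P0 k).
Proof.
  intros _ [Hpos _] [_ Hmass0] [_ Hmass1] Horder.
  apply cone_decomposition.
  - rewrite fsum_minus, Hmass0, Hmass1. ring.
  - intros l. apply majorized_upper_excess; [exact Hpos|].
    apply markov_order_majorized, Horder.
Qed.
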